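(* Let $d,n,m\geq1$ be integers, and let $\mathsf{M}_1$ be an $n$-outcome POVM and $\mathsf{M}_2$ an $m$-outcome POVM on $\mathbb{C}^d$, and set $$\bar P(\mathsf{M}_1,\mathsf{M}_2)=\frac{1}{2nm}\sum_{x=1}^n\sum_{y=1}^m\big\|\mathsf{M}_1(x)+\mathsf{M}_2(y)\big\|.$$ Then the incompatibility robustness satisfies $$\mathcal{R}(\mathsf{M}_1,\mathsf{M}_2)\geq\frac{2nm\,\bar P(\mathsf{M}_1,\mathsf{M}_2)}{d+nm}-1.$$
   Context: $\|\cdot\|$ is the operator norm. Two POVMs are compatible if there exists a POVM $\mathsf{G}(x,y)$ with marginals $\sum_y\mathsf{G}(x,y)=$ first POVM and $\sum_x\mathsf{G}(x,y)=$ second POVM. The incompatibility robustness is $\mathcal{R}(\mathsf{M}_1,\mathsf{M}_2)=\min\{t\geq0 : \{(\mathsf{M}_i+t\mathsf{N}_i)/(1+t)\}_{i=1,2}$ are compatible for some POVMs $\mathsf{N}_1$ ($n$ outcomes) and $\mathsf{N}_2$ ($m$ outcomes) on $\mathbb{C}^d\}$. *)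

From HB Require Import structures.
From mathcomp Require Import all_boot all_order all_algebra.
From mathcomp Require Import all_classical all_reals.
From mathcomp Require Import complex.
Set Implicit Arguments. Unset Strict Implicit. Unset Printing Implicit Defensive.
Import Order.TTheory GRing.Theory Num.Theory.
Local Open Scope ring_scope.

Section Defs.
Variable R : realType.
Local Notation C := (R[i]).

Definition adjmx (p q : nat) (A : 'M[C]_(p, q)) : 'M[C]_(q, p) := (map_mx Num.conj A)^T.

Definition vnorm (d : nat) (v : 'cV[C]_d) : R :=
  Num.sqrt (\sum_i (complex.Re (v i 0) ^+ 2 + complex.Im (v i 0) ^+ 2)).

Definition opnorm (d : nat) (A : 'M[C]_d) : R :=
  sup [set r : R | exists v : 'cV[C]_d, vnorm v = 1 /\ r = vnorm (A *m v)].

(* positive semidefinite: <v, A v> >= 0 for all v (order of the numeric field C) *)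
Definition psd (d : nat) (A : 'M[C]_d) : Prop :=
  forall v : 'cV[C]_d, 0 <= (adjmx v *m A *m v) 0 0.

Definition POVM (d n : nat) (M : 'I_n -> 'M[C]_d) : Prop :=
  (forall x, psd (M x)) /\ \sum_(x < n) M x = 1%:M.

Definition compatible (d n m : nat) (A : 'I_n -> 'M[C]_d) (B : 'I_m -> 'M[C]_d) : Prop :=
  exists G : 'I_n -> 'I_m -> 'M[C]_d,
    (forall x y, psd (G x y)) /\
    (forall x, \sum_(y < m) G x y = A x) /\
    (forall y, \sum_(x < n) G x y = B y).

Definition mixt (d n : nat) (M N : 'I_n -> 'M[C]_d) (t : R) : 'I_n -> 'M[C]_d :=
  fun x => (real_complex R ((1 + t)^-1)) *: (M x + (real_complex R t) *: N x).

(* incompatibility robustness (as an infimum; the minimum is attained) *)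
Definition robustness (d n m : nat) (M1 : 'I_n -> 'M[C]_d) (M2 : 'I_m -> 'M[C]_d) : R :=
  inf [set t : R | 0 <= t /\
        exists (N1 : 'I_n -> 'M[C]_d) (N2 : 'I_m -> 'M[C]_d),
          POVM N1 /\ POVM N2 /\ compatible (mixt M1 N1 t) (mixt M2 N2 t)].

Definition Pbar (d n m : nat) (M1 : 'I_n -> 'M[C]_d) (M2 : 'I_m -> 'M[C]_d) : R :=
  (2 * n%:R * m%:R)^-1 * \sum_(x < n) \sum_(y < m) opnorm (M1 x + M2 y).

End Defs.

From HB Require Import structures.
From mathcomp Require Import all_boot all_order all_algebra.
From mathcomp Require Import all_classical all_reals.
From mathcomp Require Import complex.
From mathcomp Require Import ring lra.
Set Implicit Arguments. Unset Strict Implicit. Unset Printing Implicit Defensive.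
Import Order.TTheory GRing.Theory Num.Theory.
Local Open Scope complex_scope.
Local Open Scope ring_scope.

(* If G is a joint POVM of the noisy pair (M1 + t N1)/(1 + t), (M2 + t N2)/(1 + t), then
   M1 x <= (1 + t) sum_y G x y and M2 y <= (1 + t) sum_x G x y, and since the G x y are
   positive and sum to the identity, sum_y G x y + sum_x G x y <= G x y + 1.  Hence
   ||M1 x + M2 y|| <= (1 + t) (tr G x y + 1), and summing over x and y with
   sum tr G x y = d gives 2 n m Pbar <= (1 + t) (d + n m) for every feasible t.
   Operator inequalities are handled through the quadratic forms <u, A u>; the bounds on
   the operator norm and on <u, A u> by tr A |u|^2 both come from the Cauchy-Schwarz
   inequality for positive semidefinite forms. *)

Lemma discriminant_le (R : realFieldType) (a b c : R) : 0 <= b ->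
  (forall r, 0 <= a - 2 * c * r + b * r ^+ 2) -> c ^+ 2 <= a * b.
Proof.
move=> b_ge0 Hr; have [b0 | b_neq0] := eqVneq b 0.
  rewrite b0 mulr0; have [-> | c_neq0] := eqVneq c 0; first by rewrite expr0n.
  have := Hr ((a + 1) / (2 * c)); rewrite b0 mul0r addr0.
  have -> : 2 * c * ((a + 1) / (2 * c)) = a + 1 by field.
  lra.
have b_gt0 : 0 < b by rewrite lt_def b_neq0.
have := Hr (c / b).
have -> : a - 2 * c * (c / b) + b * (c / b) ^+ 2 = (a * b - c ^+ 2) / b by field.
by rewrite pmulr_lge0 ?invr_gt0 // subr_ge0.
Qed.

Lemma le_of_sqr_le_mul (R : numDomainType) (c x : R) :
  0 <= c -> 0 <= x -> c ^+ 2 <= c * x -> c <= x.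
Proof.
rewrite le_eqVlt => /predU1P[<- //| c_gt0] _.
by rewrite expr2 ler_pM2l.
Qed.

Lemma ler_sum_row_col (R : numDomainType) (I J : finType) (g : I -> J -> R) x y :
  (forall i j, 0 <= g i j) ->
  \sum_j g x j + \sum_i g i y <= g x y + \sum_i \sum_j g i j.
Proof.
move=> g_ge0; rewrite [\sum_i g i y](bigD1 x) //= [\sum_i \sum_j _](bigD1 x) //=.
rewrite addrCA lerD2l lerD2l; apply: ler_sum => i _.
by rewrite (bigD1 y) //= lerDl sumr_ge0.
Qed.

Section SesquilinearForm.
Variables (R : realType) (d : nat).
Local Notation C := R[i].
Implicit Types (A B : 'M[C]_d) (u v w : 'cV[C]_d).

Definition form A w v : C := (adjmx w *m A *m v) 0 0.

Definition vnorm2 v : R := \sum_i (complex.Re (v i 0) ^+ 2 + complex.Im (v i 0) ^+ 2).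

Lemma ReD (x y : C) : complex.Re (x + y) = complex.Re x + complex.Re y.
Proof. exact: (raddfD (@complex.Re R : Rcomplex R -> R)). Qed.

Lemma Re_sum (I : finType) (F : I -> C) :
  complex.Re (\sum_i F i) = \sum_i complex.Re (F i).
Proof. exact: (raddf_sum (@complex.Re R : Rcomplex R -> R)). Qed.

Lemma ReM_real (r : R) (z : C) : complex.Re (r%:C * z) = r * complex.Re z.
Proof. by case: z => a b; simpc. Qed.

Lemma adjmxD p (w1 w2 : 'M[C]_(p, 1)) : adjmx (w1 + w2) = adjmx w1 + adjmx w2.
Proof. by apply/matrixP => i j; rewrite !mxE rmorphD. Qed.

Lemma adjmxZ p (a : C) (w : 'M[C]_(p, 1)) : adjmx (a *: w) = a^* *: adjmx w.
Proof. by apply/matrixP => i j; rewrite !mxE rmorphM. Qed.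

Lemma formDl A w1 w2 v : form A (w1 + w2) v = form A w1 v + form A w2 v.
Proof. by rewrite /form adjmxD !mulmxDl mxE. Qed.

Lemma formDr A w v1 v2 : form A w (v1 + v2) = form A w v1 + form A w v2.
Proof. by rewrite /form mulmxDr mxE. Qed.

Lemma formZl A a w v : form A (a *: w) v = a^* * form A w v.
Proof. by rewrite /form adjmxZ -!scalemxAl mxE. Qed.

Lemma formZr A a w v : form A w (a *: v) = a * form A w v.
Proof. by rewrite /form -!scalemxAr mxE. Qed.

Lemma formD A B w v : form (A + B) w v = form A w v + form B w v.
Proof. by rewrite /form mulmxDr mulmxDl mxE. Qed.

Lemma formZ a A w v : form (a *: A) w v = a * form A w v.
Proof. by rewrite /form -scalemxAr -scalemxAl mxE. Qed.

Lemma form_sum (I : finType) (P : pred I) (F : I -> 'M[C]_d) w v :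
  form (\sum_(i | P i) F i) w v = \sum_(i | P i) form (F i) w v.
Proof.
apply: (big_morph (fun A => form A w v)); first by move=> A B; exact: formD.
by rewrite /form mulmx0 mul0mx mxE.
Qed.

Lemma form_expand A w v (l : C) :
  form A (w + l *: v) (w + l *: v) =
  form A w w + l * form A w v + l^* * form A v w + l * l^* * form A v v.
Proof. by rewrite !formDl !formDr !formZl !formZr; ring. Qed.

Lemma form1 v : form 1%:M v v = (vnorm2 v)%:C.
Proof.
rewrite /form mulmx1 mxE /vnorm2 rmorph_sum; apply: eq_bigr => i _.
rewrite !mxE; case: (v i 0) => x y; simpc.
by apply/eqP; rewrite eq_complex /= !expr2 eqxx /=; apply/eqP; ring.
Qed.

Lemma vnorm2_ge0 v : 0 <= vnorm2 v.
Proof. by apply: sumr_ge0 => i _; rewrite addr_ge0 ?sqr_ge0. Qed.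

Lemma vnormE v : vnorm v = Num.sqrt (vnorm2 v).
Proof. by []. Qed.

Lemma form_mulmx A v : form A (A *m v) v = form 1%:M (A *m v) (A *m v).
Proof. by rewrite /form -mulmxA mulmx1. Qed.

Lemma form_deltal A (i : 'I_d) v : form A (delta_mx i 0) v = (A *m v) i 0.
Proof.
rewrite /form; have -> : adjmx (delta_mx i 0 : 'cV[C]_d) = delta_mx 0 i.
  by apply/matrixP => k l; rewrite !mxE; case: eqP; case: eqP; rewrite ?rmorph1 ?rmorph0.
by rewrite -mulmxA -rowE mxE.
Qed.

Lemma form_delta A (i : 'I_d) : form A (delta_mx i 0) (delta_mx i 0) = A i i.
Proof. by rewrite form_deltal -colE mxE. Qed.

End SesquilinearForm.

Section Psd.
Variables (R : realType) (d : nat).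
Local Notation C := R[i].
Implicit Types (A B : 'M[C]_d) (u v w : 'cV[C]_d).

Lemma psd_formE A v : psd A -> (complex.Re (form A v v))%:C = form A v v.
Proof. by move=> /(_ v) /ger0_real /RRe_real. Qed.

Lemma psd_form_ge0 A v : psd A -> 0 <= complex.Re (form A v v).
Proof. by move=> /(_ v); rewrite lecE => /andP[]. Qed.

Lemma psd_hermitian A w v : psd A -> form A v w = (form A w v)^*.
Proof.
(* Polarization: <z, A z> is real both for z = w + v and for z = w + i v. *)
move=> hA; have conj_form z : (form A z z)^* = form A z z.
  exact/conj_Creal/ger0_real/hA.
have := conj_form (w + 1 *: v); have := conj_form (w + 'i *: v).
rewrite !form_expand !(rmorphD, rmorphM) /= conjCK conjCi conjC1 !conj_form.
set c := form A w v; set c' := form A v w => E2 E1.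
have /eqP := congr2 (fun x y => 'i * x - y) E1 E2; rewrite -subr_eq0 => /eqP E.
have /eqP : 2 * 'i * (c^* - c') = 0 by rewrite -E; ring.
by rewrite !mulf_eq0 pnatr_eq0 (negbTE (neq0Ci _)) /= subr_eq0 => /eqP.
Qed.

Lemma psd_cauchy_schwarz A w v : psd A ->
  complex.Re (form A w v) ^+ 2 + complex.Im (form A w v) ^+ 2
  <= complex.Re (form A w w) * complex.Re (form A v v).
Proof.
move=> hA; have [a_ge0 b_ge0] := (psd_form_ge0 w hA, psd_form_ge0 v hA).
set a := complex.Re (form A w w) in a_ge0 *; set b := complex.Re (form A v v) in b_ge0 *.
set K := _ + _; have K_ge0 : 0 <= K by rewrite addr_ge0 ?sqr_ge0.
apply: le_of_sqr_le_mul => //; first exact: mulr_ge0.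
rewrite mulrCA; apply: discriminant_le => [|r]; first exact: mulr_ge0.
have := psd_form_ge0 (w + (- r%:C * (form A w v)^*) *: v) hA.
rewrite form_expand (psd_hermitian w v hA) -(psd_formE w hA) -(psd_formE v hA) -/a -/b /K.
case: (form A w v) => x y; simpc => /=.
lra.
Qed.

Lemma psdD A B : psd A -> psd B -> psd (A + B).
Proof. by move=> hA hB v; rewrite -/(form _ _ _) formD addr_ge0 ?hA ?hB. Qed.

Lemma psd_sum (I : finType) (P : pred I) (F : I -> 'M[C]_d) :
  (forall i, psd (F i)) -> psd (\sum_(i | P i) F i).
Proof. by move=> hF v; rewrite -/(form _ _ _) form_sum sumr_ge0 // => i _; apply: hF. Qed.

Lemma psdZ (a : C) A : 0 <= a -> psd A -> psd (a *: A).
Proof. by move=> a_ge0 hA v; rewrite -/(form _ _ _) formZ mulr_ge0 ?hA. Qed.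

Lemma psd1 : psd (1%:M : 'M[C]_d).
Proof. by move=> v; rewrite -/(form _ _ _) form1 ler0c vnorm2_ge0. Qed.

Lemma psd_diag_ge0 A i : psd A -> 0 <= complex.Re (A i i).
Proof. by rewrite -form_delta; apply: psd_form_ge0. Qed.

Lemma psd_trace_ge0 A : psd A -> 0 <= complex.Re (\tr A).
Proof. by move=> hA; rewrite Re_sum sumr_ge0 // => i _; apply: psd_diag_ge0. Qed.

Lemma psd_form_le_trace A u : psd A ->
  complex.Re (form A u u) <= complex.Re (\tr A) * vnorm2 u.
Proof.
(* With g = A u, Cauchy-Schwarz against the basis vectors gives |g_i|^2 <= A_ii q, so
   T q - 2 q l + |u|^2 l^2 >= sum_i |g_i - l u_i|^2 >= 0 for every real l. *)
move=> hA; set q := complex.Re _; set T := complex.Re _.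
have q_ge0 : 0 <= q := psd_form_ge0 u hA.
apply: le_of_sqr_le_mul => //; first by rewrite mulr_ge0 ?psd_trace_ge0 ?vnorm2_ge0.
rewrite mulrCA mulrA; apply: discriminant_le => [|l]; first exact: vnorm2_ge0.
pose g i := (A *m u) i 0.
have qE : q = \sum_i (complex.Re (u i 0) * complex.Re (g i)
                     + complex.Im (u i 0) * complex.Im (g i)).
  rewrite /q /form -mulmxA mxE Re_sum; apply: eq_bigr => i _; rewrite -/(g i) !mxE.
  by case: (u i 0) => x y; case: (g i) => a b; simpc.
rewrite {1}/T Re_sum mulr_suml {2}qE /vnorm2 mulr_sumr !mulr_suml -sumrB -big_split /=.
apply: sumr_ge0 => i _.
have := psd_cauchy_schwarz (delta_mx i 0) u hA; rewrite form_deltal form_delta -/q -/(g i).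
have := sqr_ge0 (complex.Re (g i) - l * complex.Re (u i 0)).
have := sqr_ge0 (complex.Im (g i) - l * complex.Im (u i 0)).
lra.
Qed.

Lemma psd_opnorm_le A K : psd A -> 0 <= K ->
  (forall u, complex.Re (form A u u) <= K * vnorm2 u) -> opnorm A <= K.
Proof.
move=> hA K_ge0 hK; rewrite /opnorm; set S := (X in sup X).
have [->|/set0P S_neq0] := eqVneq S set0; first by rewrite sup0.
apply: ge_sup => // _ [v [v1 ->]].
have {}v1 : vnorm2 v = 1 by rewrite -(sqr_sqrtr (vnorm2_ge0 v)) -vnormE v1 expr1n.
have hv : complex.Re (form A v v) <= K by have := hK v; rewrite v1 mulr1.
set w := A *m v.
(* |A v|^4 = |<A v, A v>|^2 <= <A v, A (A v)> <v, A v> <= K |A v|^2 K. *)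
have N_le : vnorm2 w <= K ^+ 2.
  apply: le_of_sqr_le_mul; rewrite ?vnorm2_ge0 ?sqr_ge0 //.
  have CS := psd_cauchy_schwarz w v hA.
  rewrite form_mulmx form1 /= expr0n addr0 in CS.
  apply: (le_trans CS); apply: (@le_trans _ _ (K * vnorm2 w * K)).
    by apply: ler_pM; rewrite ?psd_form_ge0 ?hK.
  by rewrite mulrAC mulrC expr2.
rewrite vnormE -(ger0_norm K_ge0) -sqrtr_sqr ler_sqrt //; exact: sqr_ge0.
Qed.

End Psd.

Section Mixture.
Variables (R : realType) (d n : nat).
Local Notation C := R[i].
Implicit Types (M N : 'I_n -> 'M[C]_d) (t : R).

Lemma scale_mixt_id (A : 'M[C]_d) t : 1 + t != 0 ->
  ((1 + t)^-1)%:C *: (A + t%:C *: A) = A.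
Proof.
move=> t_neq; rewrite -{1}[A]scale1r -scalerDl scalerA -(rmorph1 (real_complex R)).
by rewrite -rmorphD -rmorphM mulVf // rmorph1 scale1r.
Qed.

Lemma mixt_sum M N t : 1 + t != 0 ->
  \sum_x M x = 1%:M -> \sum_x N x = 1%:M -> \sum_x mixt M N t x = 1%:M.
Proof.
move=> t_neq SM SN.
by rewrite -scaler_sumr big_split /= -scaler_sumr SM SN scale_mixt_id.
Qed.

Lemma mixt_id M t : 1 + t != 0 -> mixt M M t = M.
Proof. by move=> t_neq; apply/funext => x; rewrite /mixt scale_mixt_id. Qed.

Lemma form_le_mixt M N t x u : 0 <= t -> psd (N x) ->
  complex.Re (form (M x) u u) <= (1 + t) * complex.Re (form (mixt M N t x) u u).
Proof.
move=> t_ge0 hN; rewrite /mixt formZ ReM_real formD ReD formZ ReM_real mulrA mulfV.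
  by rewrite mul1r lerDl mulr_ge0 ?psd_form_ge0.
by rewrite lt0r_neq0 // ltr_wpDr.
Qed.

End Mixture.

Lemma compatible_trivial_l (R : realType) (d n m : nat) (A : 'I_n -> 'M[R[i]]_d)
    (B : 'I_m -> 'M[R[i]]_d) (p : 'I_n -> R[i]) :
  (forall x, 0 <= p x) -> \sum_x p x = 1 -> (forall x, A x = p x *: 1%:M) ->
  POVM B -> compatible A B.
Proof.
move=> p_ge0 p_sum hA [B_psd B_sum]; exists (fun x y => p x *: B y); split.
  by move=> x y; apply: psdZ.
split=> [x|y]; first by rewrite -scaler_sumr B_sum hA.
by rewrite -scaler_suml p_sum scale1r.
Qed.

Lemma robustness_feasible (R : realType) (d n m : nat) (M1 : 'I_n -> 'M[R[i]]_d)
    (M2 : 'I_m -> 'M[R[i]]_d) :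
  (0 < n)%N -> POVM M1 -> POVM M2 ->
  exists2 t, 0 <= t & exists N1 N2,
    POVM N1 /\ POVM N2 /\ compatible (mixt M1 N1 t) (mixt M2 N2 t).
Proof.
(* Noise N1 x = (1 - M1 x)/n + 1/n^2 at t = n turns M1 into the trivial POVM x |-> 1/n. *)
move=> n_gt0 [M1_psd M1_sum] hM2.
have n_neq0 : (n%:R : R[i]) != 0 by rewrite pnatr_eq0 -lt0n.
have n1_neq0 : (1 + n%:R : R[i]) != 0 by rewrite nat1r pnatr_eq0.
pose c : R[i] := n%:R^-1.
have c_ge0 : 0 <= c by rewrite invr_ge0 ler0n.
have M1_compl x : 1%:M - M1 x = \sum_(x' | x' != x) M1 x'.
  by rewrite -M1_sum (bigD1 x) //= addrAC subrr add0r.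
pose N1 x := c *: (1%:M - M1 x) + (c * c) *: 1%:M.
have N1_povm : POVM N1.
  split=> [x|].
    apply: psdD; apply: psdZ; rewrite ?mulr_ge0 //; last exact: psd1.
    by rewrite M1_compl; apply: psd_sum.
  rewrite big_split /= -!scaler_sumr sumrB M1_sum sumr_const card_ord -scaler_nat.
  by apply/matrixP => i j; rewrite !mxE /c; field.
exists n%:R; first exact: ler0n.
exists N1, M2; split=> //; split=> //.
rewrite mixt_id; last by rewrite nat1r pnatr_eq0.
apply: (@compatible_trivial_l _ _ _ _ _ _ (fun=> c)) => // [|x].
  by rewrite sumr_const card_ord -mulr_natr mulVf.
rewrite /mixt /N1 fmorphV !rmorphD rmorph1 !rmorph_nat.
by apply/matrixP => i j; rewrite !mxE /c; field; rewrite n_neq0.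
Qed.

Section JointMeasurement.
Variables (R : realType) (d n m : nat).
Local Notation C := R[i].
Variables (M1 N1 : 'I_n -> 'M[C]_d) (M2 N2 : 'I_m -> 'M[C]_d) (t : R).
Variable G : 'I_n -> 'I_m -> 'M[C]_d.
Hypotheses (hM1 : POVM M1) (hM2 : POVM M2) (hN1 : POVM N1) (hN2 : POVM N2).
Hypotheses (t_ge0 : 0 <= t) (G_psd : forall x y, psd (G x y)).
Hypotheses (G1 : forall x, \sum_y G x y = mixt M1 N1 t x)
  (G2 : forall y, \sum_x G x y = mixt M2 N2 t y).

Let t1_neq0 : 1 + t != 0. Proof. by rewrite lt0r_neq0 // ltr_wpDr. Qed.

Lemma joint_sum : \sum_x \sum_y G x y = 1%:M.
Proof. by under eq_bigr do rewrite G1; apply: mixt_sum; [|case: hM1|case: hN1]. Qed.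

Lemma opnorm_joint_le x y :
  opnorm (M1 x + M2 y) <= (1 + t) * (complex.Re (\tr (G x y)) + 1).
Proof.
apply: psd_opnorm_le; first by apply: psdD; [case: hM1 | case: hM2].
  by rewrite mulr_ge0 ?addr_ge0 ?psd_trace_ge0 // ltW // ltr_wpDr.
move=> u; pose g i j := complex.Re (form (G i j) u u).
have g_ge0 i j : 0 <= g i j by apply: psd_form_ge0.
have g_sum : \sum_i \sum_j g i j = vnorm2 u.
  rewrite /g; under eq_bigr do rewrite -Re_sum -form_sum.
  by rewrite -Re_sum -form_sum joint_sum form1.
have h1 : complex.Re (form (M1 x) u u) <= (1 + t) * \sum_j g x j.
  by rewrite /g -Re_sum -form_sum G1 form_le_mixt //; case: hN1.
have h2 : complex.Re (form (M2 y) u u) <= (1 + t) * \sum_i g i y.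
  by rewrite /g -Re_sum -form_sum G2 form_le_mixt //; case: hN2.
rewrite formD ReD; apply: le_trans (lerD h1 h2) _.
rewrite -mulrDr -mulrA ler_wpM2l ?addr_ge0 //.
apply: le_trans (ler_sum_row_col x y g_ge0) _.
by rewrite g_sum mulrDl mul1r lerD2r psd_form_le_trace.
Qed.

Lemma joint_trace_sum : \sum_x \sum_y complex.Re (\tr (G x y)) = d%:R.
Proof.
under eq_bigr do rewrite -Re_sum -raddf_sum.
by rewrite -Re_sum -raddf_sum /= joint_sum mxtrace1 -(rmorph_nat (real_complex R)).
Qed.

Lemma sum_opnorm_le :
  \sum_x \sum_y opnorm (M1 x + M2 y) <= (1 + t) * (d%:R + n%:R * m%:R).
Proof.
have -> : n%:R * m%:R = \sum_(x < n) \sum_(y < m) (1 : R).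
  by rewrite !sumr_const !card_ord mulr_natl.
rewrite -joint_trace_sum -big_split mulr_sumr; apply: ler_sum => x _.
rewrite -big_split mulr_sumr; apply: ler_sum => y _; exact: opnorm_joint_le.
Qed.

End JointMeasurement.

Theorem mainTheorem6 (R : realType) (d n m : nat)
  (M1 : 'I_n -> 'M[R[i]]_d) (M2 : 'I_m -> 'M[R[i]]_d) :
  (1 <= d)%N -> (1 <= n)%N -> (1 <= m)%N ->
  POVM M1 -> POVM M2 ->
  robustness M1 M2 >=
    (2 * n%:R * m%:R * Pbar M1 M2) / (d%:R + n%:R * m%:R) - 1.
Proof.
move=> _ n_gt0 m_gt0 hM1 hM2.
have [t0 t0_ge0 t0_feasible] := robustness_feasible n_gt0 hM1 hM2.
apply: lb_le_inf; first by exists t0.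
move=> t [t_ge0 [N1 [N2 [hN1 [hN2 [G [G_psd [G1 G2]]]]]]]].
have bound := sum_opnorm_le hM1 hM2 hN1 hN2 t_ge0 G_psd G1 G2.
have nm_gt0 : (0 : R) < n%:R * m%:R by rewrite mulr_gt0 ?ltr0n.
rewrite /Pbar mulrA mulfV ?mul1r; last by rewrite -mulrA mulf_neq0 ?lt0r_neq0.
by rewrite lerBlDr ler_pdivrMr ?ltr_wpDl // addrC.
Qed.
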